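(* Let $(v,b)$ satisfy (C1) or (C2). Then every NWBTS$(v;b)$ $(V,\mathcal F)$ is an optimal data placement, i.e. $P(\mathcal F,x)\le P(\mathcal F',x)$ for every TS$(v;b)$ $(V,\mathcal F')$ and every real $x\ge 1$.
   Context: A triple system TS$(v;b)$ is a pair $(V,\mathcal F)$ where $V$ is a set of $v\ge3$ points and $\mathcal F=(B_1,\dots,B_b)$ is a multiset of $b$ 3-subsets of $V$ (blocks); repeated blocks are allowed. $P(\mathcal F,x)=\sum_{j=0}^3 v_jx^j$, where $v_j$ is the number of ordered pairs $(i,i')$, $i\ne i'$, with $|B_i\cap B_{i'}|=j$. For distinct $x_1,\dots,x_j\in V$, $\lambda_{x_1,\dots,x_j}$ is the number of blocks (with multiplicity) containing $\{x_1,\dots,x_j\}$. $(V,\mathcal F)$ is $j$-balanced if $|\lambda_{x_1,\dots,x_j}-\lambda_{y_1,\dots,y_j}|\le 1$ for any two $j$-subsets. The associated pair $(\lambda,\varepsilon)$ of $(v,b)$: integers with $3b=\lambda\binom v2+\varepsilon$, $-v/2<\varepsilon<v/2$. (C1): $v\equiv 2\pmod 3$ and $b\in\{\lfloor \lambda v(v-1)/6\rfloor,\lceil \lambda v(v-1)/6\rceil\}$ for an integer $\lambda$ with $\lambda\equiv1,2\pmod 3$ if $v\equiv5\pmod6$ and $\lambda\equiv 2,4\pmod 6$ if $v\equiv2\pmod 6$. (C2): $v$ even and $\lambda v(v-1)/6-v/6<b<\lambda v(v-1)/6+v/6$ for an odd integer $\lambda$. In both cases $\lambda$ is the $\lambda$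 of the associated pair. Defect graph: if all $\lambda_{x,y}\in\{\lambda-1,\lambda,\lambda+1\}$, the defect graph is the graph on $V$ with edges $D_1=\{\{x,y\}:\lambda_{x,y}=\lambda+1\}$ (labelled $+1$) and $D_{-1}=\{\{x,y\}:\lambda_{x,y}=\lambda-1\}$ (labelled $-1$); isomorphisms preserve labels. $G_1$: triangle, two $+1$ edges, one $-1$ edge; $G_{-1}$: triangle, one $+1$, two $-1$; $G_2$: 4-cycle, three $+1$, one $-1$; $G_{-2}$: 4-cycle, one $+1$, three $-1$. For even $v$: $H^0_{v,\varepsilon}$: perfect matching with $(v+2\varepsilon)/4$ edges $+1$ and $(v-2\varepsilon)/4$ edges $-1$; $H^1_{v,\varepsilon}$: disjoint union of a $K_{1,3}$ with two $+1$ and one $-1$ edge and a matching of the other $v-4$ vertices with $(v-6+2\varepsilon)/4$ edges $+1$, $(v-2-2\varepsilon)/4$ edges $-1$; $H^2_{v,\varepsilon}$: disjoint union of a $K_{1,3}$ with one $+1$ and two $-1$ edges and a matching of the other $v-4$ vertices with $(v-2+2\varepsilon)/4$ edges $+1$, $(v-6-2\varepsilon)/4$ edges $-1$. Nearly 2-balanced: all $\lambda_{x,y}\in\{\lambda-1,\lambda,\lambda+1\}$ and the defect graph is isomorphic to $G_\varepsilon$ under (C1); under (C2) to $H^0_{v,\varepsilon}$ if $\varepsilon\equiv v/2 \pmod 2$, and to $H^1_{v,\varepsilon}$ or $H^2_{v,\varepsilon}$ otherwise. An NWBTS$(v;b)$ is a nearly 2-balanced, 3-balanced TS$(v;b)$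 with $(v,b)$ satisfying (C1) or (C2). *)

From HB Require Import structures.
From mathcomp Require Import all_boot all_order all_algebra.
From mathcomp Require Import reals.
Set Implicit Arguments. Unset Strict Implicit. Unset Printing Implicit Defensive.
Import Order.TTheory GRing.Theory Num.Theory.

Section TS.
Variables (V : finType) (b : nat).

(* A triple system TS(v;b) on the point set V (v = #|V|): a family of b blocks
   (indexed by 'I_b, so repeated blocks are allowed), each a 3-subset of V. *)
Definition is_TS (F : 'I_b -> {set V}) : Prop :=
  3 <= #|V| /\ forall i, #|F i| = 3.

Definition lamS (F : 'I_b -> {set V}) (S : {set V}) : nat :=
  #|[set i | S \subset F i]|.

Definition vj (F : 'I_b -> {set V}) (j : nat) : nat :=
  #|[set p : 'I_b * 'I_b | (p.1 != p.2) && (#|F p.1 :&: F p.2| == j)]|.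

Definition Ppoly (R : realType) (F : 'I_b -> {set V}) (x : R) : R :=
  \sum_(j < 4) (vj F j)%:R * x ^+ j.

Definition balanced3 (F : 'I_b -> {set V}) : Prop :=
  forall S S' : {set V}, #|S| = 3 -> #|S'| = 3 -> lamS F S <= (lamS F S').+1.

(* label of the pair {x,y} in the defect graph: lambda_{x,y} - lambda *)
Definition defect (F : 'I_b -> {set V}) (lam : nat) (x y : V) : int :=
  (lamS F [set x; y])%:Z - lam%:Z.

(* A labelled graph given by its list of labelled edges on vertices 0..v-1;
   label_of E i j = label of {i,j}, or 0 if {i,j} is not an edge. *)
Definition label_of (E : seq (nat * nat * int)) (i j : nat) : int :=
  \sum_(e <- E | ((e.1.1 == i) && (e.1.2 == j)) || ((e.1.1 == j) && (e.1.2 == i)))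
     e.2.

(* The defect graph (on V) is isomorphic, as a labelled graph, to the graph
   with edge list E on the vertex set {0,...,v-1} (isolated vertices padded). *)
Definition defect_iso (F : 'I_b -> {set V}) (lam : nat)
  (E : seq (nat * nat * int)) : Prop :=
  exists f : 'I_#|V| -> V, bijective f /\
    forall i j : 'I_#|V|, i != j -> defect F lam (f i) (f j) = label_of E i j.

End TS.

Definition C1 (v b lam : nat) : Prop :=
  v %% 3 = 2 /\
  (b = (lam * v * (v - 1)) %/ 6 \/ b = (lam * v * (v - 1) + 5) %/ 6) /\
  (v %% 6 = 5 -> lam %% 3 = 1 \/ lam %% 3 = 2) /\
  (v %% 6 = 2 -> lam %% 6 = 2 \/ lam %% 6 = 4).

Definition C2 (v b lam : nat) : Prop :=
  ~~ odd v /\ odd lam /\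
  lam * v * (v - 1) < 6 * b + v /\ 6 * b < lam * v * (v - 1) + v.

Definition assoc_pair (v b lam : nat) (eps : int) : Prop :=
  Posz (3 * b) = (Posz (lam * 'C(v, 2)) + eps)%R /\
  (- Posz v < 2 * eps)%R /\ (2 * eps < Posz v)%R.

Local Open Scope ring_scope.

Definition ed (i j : nat) (l : int) : nat * nat * int := (i, j, l).

Definition G_edges (eps : int) : option (seq (nat * nat * int)) :=
  if eps == 1 then Some [:: ed 0 1 (1); ed 1 2 (1); ed 0 2 (-1)]
  else if eps == -1 then Some [:: ed 0 1 (1); ed 1 2 (-1); ed 0 2 (-1)]
  else if eps == 2 then Some [:: ed 0 1 (1); ed 1 2 (1); ed 2 3 (1); ed 3 0 (-1)]
  else if eps == -2 then Some [:: ed 0 1 (1); ed 1 2 (-1); ed 2 3 (-1); ed 3 0 (-1)]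
  else None.

(* H^0_{v,eps}: perfect matching {2i,2i+1}; the first (v+2eps)/4 edges +1,
   the remaining (v-2eps)/4 edges -1. *)
Definition H0_edges (v : nat) (eps : int) : seq (nat * nat * int) :=
  [seq ((2 * i)%N, (2 * i + 1)%N,
        if 4 * (i%:Z) < v%:Z + 2 * eps then 1 else -1) | i <- iota 0 v./2].

(* H^1_{v,eps}: K_{1,3} centre 0 with labels +1,+1,-1, plus a matching
   {4+2i,5+2i} with (v-6+2eps)/4 edges +1 and the others -1. *)
Definition H1_edges (v : nat) (eps : int) : seq (nat * nat * int) :=
  [:: ed 0 1 (1); ed 0 2 (1); ed 0 3 (-1)] ++
  [seq ((4 + 2 * i)%N, (5 + 2 * i)%N,
        if 4 * (i%:Z) < v%:Z - 6 + 2 * eps then 1 else -1) | i <- iota 0 (v - 4)./2].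

(* H^2_{v,eps}: K_{1,3} with labels +1,-1,-1, plus a matching with
   (v-2+2eps)/4 edges +1 and the others -1. *)
Definition H2_edges (v : nat) (eps : int) : seq (nat * nat * int) :=
  [:: ed 0 1 (1); ed 0 2 (-1); ed 0 3 (-1)] ++
  [seq ((4 + 2 * i)%N, (5 + 2 * i)%N,
        if 4 * (i%:Z) < v%:Z - 2 + 2 * eps then 1 else -1) | i <- iota 0 (v - 4)./2].

Definition defect_in_range (V : finType) (b : nat) (F : 'I_b -> {set V})
  (lam : nat) : Prop :=
  forall x y : V, x != y ->
    [|| defect F lam x y == -1, defect F lam x y == 0 | defect F lam x y == 1].

Definition nearly2_C1 (V : finType) (b : nat) (F : 'I_b -> {set V})
  (lam : nat) (eps : int) : Prop :=
  defect_in_range F lam /\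
  exists E, G_edges eps = Some E /\ defect_iso F lam E.

Definition nearly2_C2 (V : finType) (b : nat) (F : 'I_b -> {set V})
  (lam : nat) (eps : int) : Prop :=
  let v := #|V| in
  defect_in_range F lam /\
  (if ~~ odd `|eps - (v./2)%:Z|%N (* eps = v/2 mod 2 *)
   then defect_iso F lam (H0_edges v eps)
   else ((0 <= v%:Z - 6 + 2 * eps) && (0 <= v%:Z - 2 - 2 * eps)
         /\ defect_iso F lam (H1_edges v eps))
     \/ ((0 <= v%:Z - 2 + 2 * eps) && (0 <= v%:Z - 6 - 2 * eps)
         /\ defect_iso F lam (H2_edges v eps))).

Definition NWBTS (V : finType) (b : nat) (F : 'I_b -> {set V}) : Prop :=
  is_TS F /\ balanced3 F /\
  exists (lam : nat) (eps : int), assoc_pair #|V| b lam eps /\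
    ((C1 #|V| b lam /\ nearly2_C1 F lam eps) \/
     (C2 #|V| b lam /\ nearly2_C2 F lam eps)).

From HB Require Import structures.
From mathcomp Require Import all_boot all_order all_algebra.
From mathcomp Require Import reals.
From mathcomp Require Import zify lra.
Import Order.TTheory GRing.Theory Num.Theory.
Set Implicit Arguments. Unset Strict Implicit. Unset Printing Implicit Defensive.

(* Writing x^|B :&: B'| = sum_{S \subset B :&: B'} (x-1)^|S| and exchanging sums,
     P(F,x) = sum_k (x-1)^k Q_k(F) - b x^3,    Q_k(F) = sum_{|S| = k} lambda_S^2,
   so for x >= 1 it suffices that F minimises every Q_k among triple systems
   with b blocks.  The sums sum_{|S| = k} lambda_S = b * 'C(3,k) do not depend on
   the system, and a vector with fixed sum and entries differing by at most one
   minimises the sum of squares.  This settles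
   - Q_0 = b^2 and Q_k = 0 for k > 3 (trivial),
   - Q_3 (F is 3-balanced),
   - Q_1 (the degree sums of the defect graph force the lambda_x to be balanced).
   For Q_2 one compares squared deviations from lambda: F has exactly one unit
   of squared deviation per defect edge, while any triple system F' has at least
   as many by a parity argument on the graph of pairs with lambda_S - lambda odd
   (its degrees and its number of edges have prescribed parities). *)

Lemma balanced_sum_sq_min (T : finType) (P : pred T) (a a' : T -> nat) :
  \sum_(t | P t) a t = \sum_(t | P t) a' t ->
  (forall s t, P s -> P t -> a s <= (a t).+1) ->
  \sum_(t | P t) a t * a t <= \sum_(t | P t) a' t * a' t.
Proof.
move=> same_sum bal.
case: (pickP P) => [t0 Pt0|P0]; last by rewrite big_pred0.
case: (arg_minnP a Pt0) => t1 Pt1 amin; set m := a t1.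
(* n^2 + m(m+1) >= (2m+1) n for every n, with equality iff n \in {m, m+1} *)
have ge : \sum_(t | P t) ((2 * m + 1) * a' t)
          <= \sum_(t | P t) (a' t * a' t + m * (m + 1)).
  apply: leq_sum => t _; case: (leqP (a' t) m) => h.
    have : 0 <= (m - a' t) * (m + 1 - a' t) by []. nia.
  have : 0 <= (a' t - m) * (a' t - m - 1) by []. nia.
have eq : \sum_(t | P t) ((2 * m + 1) * a t)
          = \sum_(t | P t) (a t * a t + m * (m + 1)).
  apply: eq_bigr => t Pt; have := amin t Pt; have := bal t t1 Pt Pt1; nia.
rewrite big_split /= -big_distrr /= -same_sum in ge.
rewrite big_split /= -big_distrr /= in eq.
lia.
Qed.

Lemma ordered_pairs_of_2set (V : finType) (a c x y : V) : a != c ->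
  (y != x) && ([set x; y] == [set a; c]) = ((x, y) == (a, c)) || ((x, y) == (c, a)).
Proof.
move=> ac; apply/idP/idP.
- case/andP=> yx /eqP E.
  have xin : x \in [set a; c] by rewrite -E !inE eqxx.
  have yin : y \in [set a; c] by rewrite -E !inE eqxx orbT.
  move: xin yin yx; rewrite !inE => /orP[]/eqP-> /orP[]/eqP->; rewrite ?eqxx ?orbT //=.
- case/orP => /eqP [-> ->]; first by rewrite eq_sym ac eqxx.
  by rewrite ac setUC eqxx.
Qed.

Lemma sum_ordered_pairs (V : finType) (g : {set V} -> nat) :
  \sum_(x : V) \sum_(y | y != x) g [set x; y] = 2 * \sum_(S : {set V} | #|S| == 2) g S.
Proof.
rewrite pair_big_dep /=.
rewrite (partition_big (fun p : V * V => [set p.1; p.2]) (fun S => #|S| == 2)) /=;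
  last by move=> [x y] /= yx; rewrite cards2 (eq_sym x) yx.
rewrite big_distrr /=; apply: eq_bigr => S /cards2P [a [c [ac ->]]].
transitivity (\sum_(p : V * V | (p.2 != p.1) && ([set p.1; p.2] == [set a; c]))
                g [set a; c]); first by apply: eq_bigr => p /andP[_ /eqP ->].
rewrite sum_nat_const; congr (_ * _).
transitivity #|[set (a, c); (c, a)]|;
  first by apply: eq_card => -[x y]; rewrite !inE /=; exact: ordered_pairs_of_2set.
suff ne : (a, c) != (c, a) by rewrite cards2 ne.
by apply/eqP => -[h _]; rewrite h eqxx in ac.
Qed.

Lemma card_2sets (V : finType) : #|[pred S : {set V} | #|S| == 2]| = 'C(#|V|, 2).
Proof. by rewrite -card_draws; apply: eq_card => S; rewrite inE. Qed.

Lemma odd_sum (I : finType) (P : pred I) (f : I -> nat) :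
  odd (\sum_(j | P j) f j) = odd (\sum_(j | P j) (odd (f j) : nat)).
Proof. by elim/big_rec2: _ => //= j m n _ IH; rewrite !oddD IH oddb. Qed.

Lemma exists_pos_term (I : finType) (P : pred I) (f : I -> nat) :
  0 < \sum_(j | P j) f j -> exists j, P j && (0 < f j).
Proof.
move=> h; case: (pickP [pred j | P j && (0 < f j)]) => [j /= hj|none]; first by exists j.
move: h; rewrite big1 // => j Pj; move: (none j) => /=; rewrite Pj /=.
by case: (f j).
Qed.

Definition Qk (V : finType) (b : nat) (F : 'I_b -> {set V}) (k : nat) : nat :=
  \sum_(S : {set V} | #|S| == k) lamS F S * lamS F S.

Definition natdist (m n : nat) : nat := (m - n) + (n - m).
Definition dev_sq (V : finType) (b : nat) (F : 'I_b -> {set V}) (lam : nat) : nat :=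
  \sum_(S : {set V} | #|S| == 2) natdist (lamS F S) lam * natdist (lamS F S) lam.

Section TripleSystemCounting.
Variables (V : finType) (b : nat) (F : 'I_b -> {set V}).
Hypothesis TS : is_TS F.

Lemma lamS_sum (S : {set V}) : lamS F S = \sum_(i < b | S \subset F i) 1.
Proof. by rewrite /lamS sum1dep_card. Qed.

(* Double counting: each block contains 'C(3, k) subsets of size k. *)
Lemma sum_lamS (k : nat) :
  \sum_(S : {set V} | #|S| == k) lamS F S = b * 'C(3, k).
Proof.
case: TS => _ blk3; under eq_bigr do rewrite lamS_sum.
rewrite (exchange_big_dep xpredT) //=.
transitivity (\sum_(i < b) 'C(3, k)); last by rewrite sum_nat_const card_ord.
apply: eq_bigr => i _; rewrite sum1dep_card -(blk3 i) -cards_draws.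
by apply: eq_card => S; rewrite !inE andbC.
Qed.

Lemma lamS_set0 : lamS F set0 = b.
Proof. by rewrite /lamS -[RHS]card_ord; apply: eq_card => i; rewrite inE sub0set. Qed.

Lemma lamS_large (S : {set V}) : 3 < #|S| -> lamS F S = 0.
Proof.
case: TS => _ blk3 h; apply/eqP; rewrite cards_eq0; apply/eqP/setP => i; rewrite !inE.
by apply/negP => /subset_leq_card; rewrite blk3; lia.
Qed.

(* Each block through x contains exactly two pairs {x, y}. *)
Lemma sum_lamS_pairs_at (x : V) :
  \sum_(y | y != x) lamS F [set x; y] = 2 * lamS F [set x].
Proof.
case: TS => _ blk3; under eq_bigr do rewrite lamS_sum.
rewrite (exchange_big_dep xpredT) //= lamS_sum big_distrr /= big_mkcond [RHS]big_mkcond /=.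
apply: eq_bigr => i _; rewrite sum1dep_card sub1set.
case: ifP => xF.
  have -> : [set y | y != x & [set x; y] \subset F i] = F i :\ x.
    by apply/setP => y; rewrite !inE subUset !sub1set xF.
  by have := cardsD1 x (F i); rewrite blk3 xF; lia.
apply/eqP; rewrite cards_eq0; apply/eqP/setP => y.
by rewrite !inE subUset !sub1set xF andbF.
Qed.

Lemma Qk0 : Qk F 0 = b * b.
Proof. by rewrite /Qk (big_pred1 set0) ?lamS_set0 // => S; rewrite cards_eq0. Qed.

Lemma Qk_large (k : nat) : 3 < k -> Qk F k = 0.
Proof. by move=> k3; rewrite /Qk big1 // => S /eqP Sk; rewrite lamS_large // Sk. Qed.

Lemma Qk2_dev_sq (lam : nat) :
  Qk F 2 + 'C(#|V|, 2) * (lam * lam) = dev_sq F lam + 2 * lam * (3 * b).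
Proof.
rewrite -card_2sets -sum_nat_const /Qk /dev_sq -big_split /=.
rewrite -[3 * b](mulnC b) -(sum_lamS 2) big_distrr -big_split /=.
by apply: eq_bigr => S _; rewrite /natdist; nia.
Qed.

End TripleSystemCounting.

Lemma Qk_min (V : finType) (b : nat) (F F' : 'I_b -> {set V}) (k : nat) :
  is_TS F -> is_TS F' ->
  (forall S S' : {set V}, #|S| = k -> #|S'| = k -> lamS F S <= (lamS F S').+1) ->
  Qk F k <= Qk F' k.
Proof.
move=> TS TS' bal; apply: balanced_sum_sq_min; first by rewrite !sum_lamS.
by move=> S T /eqP hS /eqP hT; apply: bal.
Qed.

Lemma Qk2_min (V : finType) (b : nat) (F F' : 'I_b -> {set V}) (lam : nat) :
  is_TS F -> is_TS F' -> dev_sq F lam <= dev_sq F' lam -> Qk F 2 <= Qk F' 2.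
Proof.
by move=> TS TS' hd; have := Qk2_dev_sq TS lam; have := Qk2_dev_sq TS' lam; lia.
Qed.

Section PolynomialReduction.
Local Open Scope ring_scope.
Variables (R : realType) (V : finType) (b : nat).

Lemma binomial_subsets (A : {set V}) (y : R) :
  (y + 1) ^+ #|A| = \sum_(S : {set V} | S \subset A) y ^+ #|S|.
Proof.
rewrite exprD1n.
rewrite (partition_big (fun S : {set V} => inord #|S| : 'I_#|A|.+1) xpredT) //=.
apply: eq_bigr => k _.
have -> : \sum_(S : {set V} | (S \subset A) && (inord #|S| == k)) y ^+ #|S|
          = \sum_(S : {set V} | (S \subset A) && (#|S| == k)) y ^+ k.
  apply: eq_big => S.
    case sA: (S \subset A) => //=.
    have le : (#|S| <= #|A|)%N by apply: subset_leq_card.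
    apply/eqP/eqP => [eq|eq]; first by rewrite -eq inordK.
    by apply: val_inj; rewrite /= inordK ?eq.
  by move=> /andP[sA /eqP <-]; rewrite inordK // ltnS subset_leq_card.
rewrite sumr_const -cards_draws.
by congr (_ *+ _); apply: eq_card => S; rewrite inE.
Qed.

Lemma sum_by_card (G : {set V} -> R) :
  \sum_(S : {set V}) G S = \sum_(k < #|V|.+1) \sum_(S : {set V} | #|S| == k) G S.
Proof.
rewrite (partition_big (fun S : {set V} => inord #|S| : 'I_#|V|.+1) xpredT) //=.
apply: eq_bigr => k _; apply: eq_bigl => S /=.
have le : (#|S| <= #|V|)%N by apply: max_card.
apply/eqP/eqP => [eq|eq]; first by rewrite -eq inordK.
by apply: val_inj; rewrite /= inordK ?eq.
Qed.

Lemma card_block_pairs_containing (F : 'I_b -> {set V}) (S : {set V}) :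
  #|[set p : 'I_b * 'I_b | (p.1 != p.2) && (S \subset F p.1 :&: F p.2)]|
  = (lamS F S * lamS F S - lamS F S)%N.
Proof.
set A := [set i | S \subset F i].
have -> : [set p : 'I_b * 'I_b | (p.1 != p.2) && (S \subset F p.1 :&: F p.2)]
          = setX A A :\: [set (i, i) | i in A].
  apply/setP => -[i j]; rewrite !inE /= subsetI.
  case: (eqVneq i j) => [<-|ne] /=.
    rewrite andbb; case SFi: (S \subset F i); rewrite ?andbF //= andbT.
    by rewrite (imset_f (fun k => (k, k)) (_ : i \in A)) // inE.
  suff -> : (i, j) \notin [set (i0, i0) | i0 in A] by [].
  by apply/imsetP => -[k _ [e1 e2]]; move: ne; rewrite e1 e2 eqxx.
rewrite cardsD cardsX (setIidPr _); first by rewrite card_imset // => i j [].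
by apply/subsetP => p /imsetP[i iA ->]; rewrite inE /= iA.
Qed.

Variables (F : 'I_b -> {set V}) (x : R).
Hypothesis TS : is_TS F.

Lemma Ppoly_pairs :
  Ppoly F x = \sum_(p : 'I_b * 'I_b | p.1 != p.2) x ^+ #|F p.1 :&: F p.2|.
Proof.
have cap_lt4 (p : 'I_b * 'I_b) : (#|F p.1 :&: F p.2| < 4)%N.
  by case: TS => _ blk3; rewrite ltnS -(blk3 p.1) subset_leq_card ?subsetIl.
transitivity (\sum_(p : 'I_b * 'I_b | p.1 != p.2)
                \sum_(j < 4 | #|F p.1 :&: F p.2| == j) x ^+ j);
  last by apply: eq_bigr => p _; rewrite (big_pred1 (Ordinal (cap_lt4 p))).
rewrite (exchange_big_dep xpredT) //=.
by apply: eq_bigr => j _; rewrite sumr_const /vj mulrC -mulr_natr mul1r cardsE mulr_natr.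
Qed.

Lemma Ppoly_subsets : Ppoly F x =
  \sum_(S : {set V}) (x - 1) ^+ #|S| * (lamS F S * lamS F S - lamS F S)%N%:R.
Proof.
rewrite Ppoly_pairs.
under eq_bigr => p _ do rewrite -{1}(subrK 1 x) binomial_subsets.
rewrite (exchange_big_dep xpredT) //=.
apply: eq_bigr => S _; rewrite sumr_const -card_block_pairs_containing mulr_natr.
by congr (_ *+ _); rewrite cardsE; apply: eq_card => p.
Qed.

(* The linear part: every block contributes (1 + (x-1))^3 = x^3. *)
Lemma sum_subsets_lamS :
  \sum_(S : {set V}) (x - 1) ^+ #|S| * (lamS F S)%:R = b%:R * x ^+ 3.
Proof.
case: TS => _ blk3.
transitivity (\sum_(S : {set V}) \sum_(i | S \subset F i) (x - 1) ^+ #|S|).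
  apply: eq_bigr => S _; rewrite sumr_const mulr_natr /lamS cardsE.
  by congr (_ *+ _); apply: eq_card => i.
rewrite (exchange_big_dep xpredT) //=.
transitivity (\sum_(i < b) x ^+ 3); last by rewrite sumr_const card_ord mulr_natl.
by apply: eq_bigr => i _; rewrite -(blk3 i) -{2}(subrK 1 x) binomial_subsets.
Qed.

Lemma Ppoly_Qk :
  Ppoly F x = \sum_(k < #|V|.+1) (x - 1) ^+ k * (Qk F k)%:R - b%:R * x ^+ 3.
Proof.
rewrite Ppoly_subsets -sum_subsets_lamS.
transitivity (\sum_(S : {set V}) ((x - 1) ^+ #|S| * (lamS F S * lamS F S)%N%:R
                                  - (x - 1) ^+ #|S| * (lamS F S)%:R)).
  apply: eq_bigr => S _; rewrite natrB ?mulrBr //.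
  by case: (lamS F S) => // n; rewrite leq_pmulr.
rewrite sumrB sum_by_card; congr (_ - _).
apply: eq_bigr => k _; rewrite /Qk natr_sum mulr_sumr.
by apply: eq_bigr => S /eqP <-.
Qed.

End PolynomialReduction.

Lemma Ppoly_le_of_Qk (R : realType) (V : finType) (b : nat) (F F' : 'I_b -> {set V}) (x : R) :
  is_TS F -> is_TS F' -> (forall k, Qk F k <= Qk F' k) -> (1 <= x)%R ->
  (Ppoly F x <= Ppoly F' x)%R.
Proof.
move=> TS TS' le_Q x1; rewrite !Ppoly_Qk // lerD2r.
apply: ler_sum => k _; apply: ler_wpM2l; first by rewrite exprn_ge0 // subr_ge0.
by rewrite ler_nat.
Qed.

(* The parity lower bound for dev_sq.  The pairs S with lambda_S - lambda odd
   form the "odd graph" of F; each of its edges costs at least 1 in dev_sq. *)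
Section OddGraph.
Variables (V : finType) (b : nat) (F : 'I_b -> {set V}) (lam : nat).

Definition odd_pair (S : {set V}) : nat := odd (lamS F S + lam).
Definition odd_deg (x : V) : nat := \sum_(y | y != x) odd_pair [set x; y].
Definition odd_size : nat := \sum_(S : {set V} | #|S| == 2) odd_pair S.

Lemma odd_size_le_dev_sq : odd_size <= dev_sq F lam.
Proof.
apply: leq_sum => S _; rewrite /odd_pair /natdist.
case: (boolP (odd (lamS F S + lam))) => h //=.
have /eqP ne : lamS F S != lam by apply: contraTneq h => ->; rewrite addnn odd_double.
nia.
Qed.

Lemma odd_size_degrees : 2 * odd_size = \sum_x odd_deg x.
Proof. by rewrite /odd_size /odd_deg sum_ordered_pairs. Qed.

Lemma even_graph_size :
  (forall x, ~~ odd (odd_deg x)) -> 0 < odd_size -> 3 <= odd_size.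
Proof.
move=> ev nonempty.
have odd_pair_le1 S : odd_pair S <= 1 by rewrite /odd_pair; case: odd.
(* an even vertex incident to an edge xy has a second edge xz *)
have other_edge (x y : V) : y != x -> 0 < odd_pair [set x; y] ->
    exists z, [&& z != x, z != y & 0 < odd_pair [set x; z]].
  move=> yx pos; move: (ev x); rewrite /odd_deg (bigD1 y) //=.
  have -> : odd_pair [set x; y] = 1 by move: pos (odd_pair_le1 [set x; y]); lia.
  move=> evx; have : 0 < \sum_(i | (i != x) && (i != y)) odd_pair [set x; i].
    by move: evx; case: (\sum_(i | _) _).
  by case/exists_pos_term => z /andP[/andP[zx zy] pz]; exists z; rewrite zx zy pz.
have [S /andP[S2 oS]] := exists_pos_term nonempty.
case/cards2P: S2 oS => x [y [xy ->]] oxy.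
have yx : y != x by rewrite eq_sym.
have [z /and3P[zx zy oxz]] := other_edge x y yx oxy.
have xz : x != z by rewrite eq_sym.
have ozx : 0 < odd_pair [set z; x] by rewrite setUC.
have [w /and3P[wz wx ozw]] := other_edge z x xz ozx.
have n12 : [set x; z] != [set x; y].
  by apply/eqP => /setP /(_ z); rewrite !inE eqxx orbT (negbTE zx) (negbTE zy).
have n13 : [set z; w] != [set x; y].
  by apply/eqP => /setP /(_ z); rewrite !inE eqxx (negbTE zx) (negbTE zy).
have n23 : [set z; w] != [set x; z].
  apply/eqP => /setP /(_ x); rewrite !inE eqxx.
  by rewrite (negbTE xz) (eq_sym x w) (negbTE wx).
rewrite /odd_size (bigD1 [set x; y]) /=; last by rewrite cards2 xy.
rewrite (bigD1 [set x; z]) /=; last by rewrite cards2 xz n12.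
rewrite (bigD1 [set z; w]) /=; last by rewrite cards2 (eq_sym z w) wz n13 n23.
lia.
Qed.

Lemma odd_graph_size : (forall x, odd (odd_deg x)) -> #|V| <= 2 * odd_size.
Proof.
move=> od; rewrite odd_size_degrees -sum1_card; apply: leq_sum => x _.
by move: (od x); case: (odd_deg x).
Qed.

Hypothesis TS : is_TS F.

Lemma odd_deg_parity (x : V) : odd (odd_deg x) = odd (lam * (#|V| - 1)).
Proof.
rewrite /odd_deg /odd_pair -odd_sum big_split /= sum_lamS_pairs_at //.
rewrite oddD oddM /=.
have -> : \sum_(y | y != x) lam = \sum_(y in predC1 x) lam by [].
by rewrite sum_nat_const cardC1 subn1 mulnC.
Qed.

Lemma odd_size_parity : odd odd_size = odd (3 * b + 'C(#|V|, 2) * lam).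
Proof.
rewrite /odd_size /odd_pair -odd_sum big_split /= sum_lamS //.
by rewrite -card_2sets -sum_nat_const mulnC.
Qed.

(* With no odd pairs, dev_sq vanishes only if every pair has lambda_S = lambda,
   which forces 3b = 'C(v,2) lambda; otherwise some deviation is >= 2. *)
Lemma dev_sq_no_odd_pairs :
  odd_size = 0 -> 3 * b != 'C(#|V|, 2) * lam -> 4 <= dev_sq F lam.
Proof.
move=> o0 ne.
case: (pickP [pred S : {set V} | (#|S| == 2) && (lamS F S != lam)])
  => [S /= /andP[S2 /eqP Sne]|none].
  have : odd_pair S <= 0 by rewrite -o0 /odd_size (bigD1 S) //= leq_addr.
  rewrite /odd_pair; case: (boolP (odd (lamS F S + lam))) => //= ho _.
  have two : 2 <= natdist (lamS F S) lam.
    have : (lamS F S + lam) %% 2 = 0 by rewrite modn2 (negbTE ho).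
    rewrite /natdist; lia.
  apply: leq_trans (_ : natdist (lamS F S) lam * natdist (lamS F S) lam <= _).
    nia.
  by rewrite /dev_sq (bigD1 S) //= leq_addr.
case/eqP: ne; rewrite mulnC -(sum_lamS TS 2) -card_2sets -sum_nat_const.
apply: eq_bigr => S S2.
by move: (none S) => /=; rewrite S2 /= => /negbFE /eqP.
Qed.

End OddGraph.

Local Open Scope ring_scope.

Definition joins (e : nat * nat * int) (i j : nat) : bool :=
  ((e.1.1 == i) && (e.1.2 == j)) || ((e.1.1 == j) && (e.1.2 == i)).
Definition edge_wf (v : nat) (e : nat * nat * int) : bool :=
  [&& e.1.1 < v, e.1.2 < v & e.1.1 != e.1.2]%N.
Definition unit_label (e : nat * nat * int) : bool := (e.2 == 1) || (e.2 == -1).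
Definition edge_key (e : nat * nat * int) : nat * nat :=
  (minn e.1.1 e.1.2, maxn e.1.1 e.1.2).

Definition label_deg (E : seq (nat * nat * int)) (i : nat) : int :=
  \sum_(e <- E) e.2 * ((e.1.1 == i) + (e.1.2 == i))%N%:R.

Definition good_graph (v : nat) (E : seq (nat * nat * int)) (lo : int) : Prop :=
  [/\ all (edge_wf v) E, uniq (map edge_key E), all unit_label E &
      forall i, (i < v)%N -> lo <= label_deg E i <= lo + 2].

Lemma sum_indicator_ord (v n : nat) (P : pred 'I_v) (nv : (n < v)%N) :
  P (Ordinal nv) -> (\sum_(j : 'I_v | P j) ((n == j) : nat) = 1)%N.
Proof.
move=> Pn; rewrite (bigD1 (Ordinal nv)) //= eqxx big1 // => j /andP[_ jn].
by case: eqP => // h; case/negP: jn; apply/eqP/val_inj; rewrite /= h.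
Qed.

Lemma count_incidences (v : nat) (e : nat * nat * int) (i : 'I_v) : edge_wf v e ->
  (\sum_(j : 'I_v | j != i) (joins e i j : nat) = (e.1.1 == i) + (e.1.2 == i))%N.
Proof.
case/and3P => h1 h2 h12; rewrite /joins.
case: (eqVneq e.1.1 i) => [e1|n1].
  have n2 : e.1.2 != i by rewrite -e1 eq_sym.
  rewrite (negbTE n2) /= -(sum_indicator_ord (P := [pred j | j != i]) (nv := h2)) //= addn0.
  by apply: eq_bigr => j _; rewrite andbF orbF.
case: (eqVneq e.1.2 i) => [e2|n2].
  rewrite /= -(sum_indicator_ord (P := [pred j | j != i]) (nv := h1)) //=.
  by apply: eq_bigr => j _; rewrite andbT.
by rewrite big1 // => j _; rewrite !andbF.
Qed.

Lemma sum_label_of (v : nat) (E : seq (nat * nat * int)) (i : 'I_v) :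
  all (edge_wf v) E -> \sum_(j : 'I_v | j != i) label_of E i j = label_deg E i.
Proof.
move=> /allP wfE; rewrite /label_of.
under eq_bigr do rewrite big_mkcond /=.
rewrite exchange_big /=; apply: eq_big_seq => e eE.
rewrite -(count_incidences i (wfE e eE)) natr_sum mulr_sumr; apply: eq_bigr => j _.
by rewrite /joins; case: ifP => _; rewrite ?mulr1 ?mulr0.
Qed.

Lemma label_of_neq0 (E : seq (nat * nat * int)) (i j : nat) :
  uniq (map edge_key E) -> all unit_label E ->
  ((label_of E i j != 0) : nat) = (\sum_(e <- E) (joins e i j : nat))%N.
Proof.
move=> uE /allP lE.
have -> : (\sum_(e <- E) (joins e i j : nat) = \sum_(e <- E | joins e i j) 1)%N.
  by rewrite [RHS]big_mkcond; apply: eq_bigr => e _; case: joins.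
rewrite sum1_count -size_filter /label_of -big_filter.
have key e : joins e i j -> edge_key e = (minn i j, maxn i j).
  rewrite /joins /edge_key => /orP[/andP[/eqP -> /eqP ->]|/andP[/eqP -> /eqP ->]] //.
  by rewrite minnC maxnC.
have sub e : e \in [seq e <- E | joins e i j] -> (e \in E) && joins e i j.
  by rewrite mem_filter andbC.
have uF : uniq (map edge_key [seq e <- E | joins e i j]).
  by apply: subseq_uniq uE; apply/map_subseq/filter_subseq.
move: sub uF; case: [seq e <- E | joins e i j] => [|a [|c t]] sub uF.
- by rewrite big_nil.
- rewrite big_cons big_nil addr0.
  have /andP[aE _] := sub a (mem_head _ _).
  by have /orP[/eqP ->|/eqP ->] := lE a aE.
- have /andP[_ ca] := sub a (mem_head _ _).
  have /andP[_ cc] : (c \in E) && joins c i j by apply: sub; rewrite !inE eqxx orbT.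
  by move: uF; rewrite /= (key a ca) (key c cc) inE eqxx.
Qed.

Lemma sum_label_of_neq0 (v : nat) (E : seq (nat * nat * int)) :
  all (edge_wf v) E -> uniq (map edge_key E) -> all unit_label E ->
  (\sum_(i : 'I_v) \sum_(j : 'I_v | j != i) ((label_of E i j != 0) : nat)
   = 2 * size E)%N.
Proof.
move=> /allP wfE uE lE.
under eq_bigr => i _ do under eq_bigr => j _ do rewrite (label_of_neq0 i j uE lE).
under eq_bigr do rewrite exchange_big /=.
rewrite exchange_big /= -sum1_size big_distrr /=; apply: eq_big_seq => e eE.
under eq_bigr do rewrite (count_incidences _ (wfE e eE)).
have /and3P[h1 h2 _] := wfE e eE.
rewrite big_split /= (sum_indicator_ord (P := xpredT) (nv := h1)) //.
by rewrite (sum_indicator_ord (P := xpredT) (nv := h2)).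
Qed.

Lemma label_deg_cat (E1 E2 : seq (nat * nat * int)) (i : nat) :
  label_deg (E1 ++ E2) i = label_deg E1 i + label_deg E2 i.
Proof. by rewrite /label_deg big_cat. Qed.

Lemma label_deg_out (n : nat) (E : seq (nat * nat * int)) (i : nat) :
  all (edge_wf n) E -> (n <= i)%N -> label_deg E i = 0.
Proof.
move=> /allP wfE ni; rewrite /label_deg big1_seq // => e /andP[_ eE].
have /and3P[h1 h2 _] := wfE e eE.
by rewrite (ltn_eqF (leq_trans h1 ni)) (ltn_eqF (leq_trans h2 ni)) mulr0.
Qed.

Lemma edge_wf_widen (n v : nat) (e : nat * nat * int) :
  (n <= v)%N -> edge_wf n e -> edge_wf v e.
Proof.
by move=> nv /and3P[h1 h2 h12]; rewrite /edge_wf (leq_trans h1 nv) (leq_trans h2 nv).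
Qed.

Lemma small_graph_good (v : nat) (E : seq (nat * nat * int)) (lo : int) :
  (4 <= v)%N -> all (edge_wf 4) E -> uniq (map edge_key E) -> all unit_label E ->
  lo <= 0 <= lo + 2 -> (forall i, (i < 4)%N -> lo <= label_deg E i <= lo + 2) ->
  good_graph v E lo.
Proof.
move=> v4 wf4 uE lE lo0 small; split=> //.
  by apply: sub_all wf4 => e; apply: edge_wf_widen.
by move=> i _; case: (ltnP i 4) => [/small //|i4]; rewrite (label_deg_out wf4 i4).
Qed.

Lemma G_good (v : nat) (eps : int) (E : seq (nat * nat * int)) :
  (4 <= v)%N -> G_edges eps = Some E ->
  [/\ (`|eps| = 1 \/ `|eps| = 2)%N, size E = (`|eps| + 2)%N &
      exists lo, good_graph v E lo].
Proof.
move=> v4; rewrite /G_edges.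
case: eqP => [-> [<-]|_].
  split; [by left | by [] | exists 0]; apply: small_graph_good => //.
  by case=> [|[|[|[|]]]] //; rewrite /label_deg unlock.
case: eqP => [-> [<-]|_].
  split; [by left | by [] | exists (-2)]; apply: small_graph_good => //.
  by case=> [|[|[|[|]]]] //; rewrite /label_deg unlock.
case: eqP => [-> [<-]|_].
  split; [by right | by [] | exists 0]; apply: small_graph_good => //.
  by case=> [|[|[|[|]]]] //; rewrite /label_deg unlock.
case: eqP => [-> [<-]|_ //].
split; [by right | by [] | exists (-2)]; apply: small_graph_good => //.
by case=> [|[|[|[|]]]] //; rewrite /label_deg unlock.
Qed.

Definition matching (o n : nat) (l : nat -> int) : seq (nat * nat * int) :=
  [seq ((o + 2 * k)%N, (o + 2 * k + 1)%N, l k) | k <- iota 0 n].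

Lemma sum_iota_indicator (g : nat -> int) (n m : nat) :
  \sum_(k <- iota 0 n) g k * (k == m)%:R = if (m < n)%N then g m else 0.
Proof.
elim: n => [|n IH]; first by rewrite big_nil.
rewrite -addn1 iotaD big_cat /= big_seq1 IH add0n addn1.
case: (ltngtP m n) => h.
- by rewrite /= mulr0 addr0 (ltn_trans h (ltnSn _)).
- by rewrite /= ltnS leqNgt h mulr0 addr0.
- by rewrite /= h mulr1 add0r ltnSn.
Qed.

Lemma matching_wf (v o n : nat) (l : nat -> int) :
  (o + 2 * n <= v)%N -> all (edge_wf v) (matching o n l).
Proof.
move=> h; apply/allP => e /mapP[k]; rewrite mem_iota add0n => /andP[_ kn] -> /=.
by rewrite /edge_wf /=; apply/and3P; split; lia.
Qed.

Lemma matching_key (o n : nat) (l : nat -> int) :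
  map edge_key (matching o n l)
  = [seq ((o + 2 * k)%N, (o + 2 * k + 1)%N) | k <- iota 0 n].
Proof.
rewrite /matching -map_comp; apply: eq_map => k /=; rewrite /edge_key /=.
by rewrite (minn_idPl (leq_addr 1 _)) (maxn_idPr (leq_addr 1 _)).
Qed.

Lemma matching_uniq (o n : nat) (l : nat -> int) : uniq (map edge_key (matching o n l)).
Proof. by rewrite matching_key map_inj_uniq ?iota_uniq // => k1 k2 [h _]; lia. Qed.

Lemma label_deg_matching (o n : nat) (l : nat -> int) (i : nat) :
  label_deg (matching o n l) i
  = if (o <= i < o + 2 * n)%N then l ((i - o) %/ 2)%N else 0.
Proof.
rewrite /label_deg big_map /=.
case: (leqP o i) => hoi /=.
  have ends k : ((o + 2 * k == i) + (o + 2 * k + 1 == i))%N = (k == (i - o) %/ 2)%N.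
    by case: eqP => h1; case: eqP => h2; case: eqP => h3 //=; lia.
  under eq_bigr => k _ do rewrite ends.
  by rewrite sum_iota_indicator; congr (if _ then _ else _); apply/idP/idP; lia.
rewrite big1_seq // => k _.
by rewrite (gtn_eqF (leq_trans hoi (leq_addr _ _))) gtn_eqF ?mulr0 //; lia.
Qed.

Definition sgn_lt (t : int) (k : nat) : int := if 4 * (k%:Z) < t then 1 else -1.

Lemma sgn_lt_unit (t : int) (k : nat) : (sgn_lt t k == 1) || (sgn_lt t k == -1).
Proof. by rewrite /sgn_lt; case: ifP. Qed.

Lemma matching_sgn_lt_label (o n : nat) (t : int) : all unit_label (matching o n (sgn_lt t)).
Proof. by apply/allP => e /mapP[k _ ->]; exact: sgn_lt_unit. Qed.

Lemma sgn_lt_window (t : int) (k : nat) : -1 <= sgn_lt t k <= 1.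
Proof. by rewrite /sgn_lt; case: ifP. Qed.

Lemma even_half (v : nat) : ~~ odd v -> (2 * v./2)%N = v.
Proof. by move=> ev; have := odd_double_half v; rewrite (negbTE ev) add0n -mul2n. Qed.

Lemma H0_good (v : nat) (eps : int) : ~~ odd v ->
  good_graph v (H0_edges v eps) (-1) /\ size (H0_edges v eps) = v./2.
Proof.
move=> ev; have e2 := even_half ev.
have -> : H0_edges v eps = matching 0 v./2 (sgn_lt (v%:Z + 2 * eps)).
  by apply: eq_map => k; rewrite add0n.
split; last by rewrite size_map size_iota.
split; [apply: matching_wf; lia | exact: matching_uniq |
        exact: matching_sgn_lt_label |].
move=> i iv; rewrite label_deg_matching.
by case: ifP => [_|h]; [exact: sgn_lt_window | lia].
Qed.

Definition star3 (a c d : int) : seq (nat * nat * int) :=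
  [:: ed 0 1 a; ed 0 2 c; ed 0 3 d].

Lemma star_matching_good (v : nat) (a c d t : int) :
  ~~ odd v -> (4 <= v)%N -> all unit_label (star3 a c d) -> -1 <= a + c + d <= 1 ->
  good_graph v (star3 a c d ++ matching 4 (v - 4)./2 (sgn_lt t)) (-1)
  /\ size (star3 a c d ++ matching 4 (v - 4)./2 (sgn_lt t)) = (v./2).+1.
Proof.
move=> ev v4 lab sum_acd; have e2 := even_half ev.
have wf4 : all (edge_wf 4) (star3 a c d) by [].
split; last by rewrite size_cat size_map size_iota /=; lia.
split.
- rewrite all_cat (sub_all (fun e => @edge_wf_widen 4 v e v4) wf4) /=.
  by apply: matching_wf; lia.
- rewrite map_cat cat_uniq matching_uniq andbT /=.
  rewrite matching_key; apply/hasPn => p /mapP[k _ ->].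
  by rewrite !inE /edge_key.
- by rewrite all_cat lab matching_sgn_lt_label.
move=> i iv; rewrite label_deg_cat label_deg_matching.
case: (ltnP i 4) => i4.
  have [la lc ld] : [/\ -1 <= a <= 1, -1 <= c <= 1 & -1 <= d <= 1].
    by move: lab => /and4P[]; rewrite /unit_label /= => /orP[]/eqP-> /orP[]/eqP-> /orP[]/eqP->.
  rewrite /= addr0 /label_deg unlock /=.
  case: i i4 {iv} => [|[|[|[|//]]]] _;
    by rewrite ?(addn0, add0n, mulr1n, mulr0n, mulr1, mulr0, addr0, add0r); lra.
rewrite (label_deg_out wf4 i4) add0r.
have -> : (i < 4 + 2 * (v - 4)./2)%N by lia.
exact: sgn_lt_window.
Qed.

Lemma H1_good (v : nat) (eps : int) : ~~ odd v -> (4 <= v)%N ->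
  good_graph v (H1_edges v eps) (-1) /\ size (H1_edges v eps) = (v./2).+1.
Proof.
move=> ev v4; have -> : H1_edges v eps
  = star3 1 1 (-1) ++ matching 4 (v - 4)./2 (sgn_lt (v%:Z - 6 + 2 * eps)).
  by congr (_ ++ _); apply: eq_map => k; rewrite addnAC.
exact: star_matching_good.
Qed.

Lemma H2_good (v : nat) (eps : int) : ~~ odd v -> (4 <= v)%N ->
  good_graph v (H2_edges v eps) (-1) /\ size (H2_edges v eps) = (v./2).+1.
Proof.
move=> ev v4; have -> : H2_edges v eps
  = star3 1 (-1) (-1) ++ matching 4 (v - 4)./2 (sgn_lt (v%:Z - 2 + 2 * eps)).
  by congr (_ ++ _); apply: eq_map => k; rewrite addnAC.
exact: star_matching_good.
Qed.

Section DefectGraph.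
Variables (V : finType) (b : nat) (F : 'I_b -> {set V}) (lam : nat).
Variables (E : seq (nat * nat * int)) (lo : int).
Hypotheses (iso : defect_iso F lam E) (good : good_graph #|V| E lo).

Lemma defect_deg_window (x : V) :
  lo <= \sum_(y | y != x) defect F lam x y <= lo + 2.
Proof.
have [f [fbij isoE]] := iso; have [wf _ _ win] := good; have [g fK gK] := fbij.
rewrite -[x]gK; set i := g x.
suff -> : \sum_(y | y != f i) defect F lam (f i) y = label_deg E i by exact: win.
rewrite (reindex f (onW_bij _ fbij)) /= -(sum_label_of i wf).
apply: eq_big => [j|j ji]; first by rewrite (inj_eq (bij_inj fbij)).
by rewrite isoE //; apply: contraNneq ji => ->.
Qed.

Lemma defect_pairs_count :
  (\sum_(x : V) \sum_(y | y != x) ((lamS F [set x; y] != lam) : nat) = 2 * size E)%N.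
Proof.
have [f [fbij isoE]] := iso; have [wf uE lE _] := good.
rewrite -(sum_label_of_neq0 wf uE lE) (reindex f (onW_bij _ fbij)) /=.
apply: eq_bigr => i _; rewrite (reindex f (onW_bij _ fbij)) /=.
apply: eq_big => [j|j ji]; first by rewrite (inj_eq (bij_inj fbij)).
have ij : i != j by rewrite eq_sym; apply: contraNneq ji => ->.
by rewrite -(isoE i j ij) /defect subr_eq0 eqz_nat.
Qed.

Lemma dev_sq_defect_graph : defect_in_range F lam -> dev_sq F lam = size E.
Proof.
move=> rng.
have -> : dev_sq F lam
          = (\sum_(S : {set V} | #|S| == 2) ((lamS F S != lam) : nat))%N.
  apply: eq_bigr => S /cards2P [x [y [xy ->]]].
  have := rng x y xy; rewrite /defect /natdist.
  case: (boolP (lamS F [set x; y] == lam)) => [/eqP -> _|ne]; first by rewrite subnn.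
  by move=> /or3P[] /eqP h; move: ne; lia.
have := defect_pairs_count.
by rewrite (sum_ordered_pairs (fun S => ((lamS F S != lam) : nat))); lia.
Qed.

(* The defect degree of x is 2 lambda_x - (v - 1) lambda, so a window of width
   2 makes the point multiplicities lambda_x balanced. *)
Lemma points_balanced : is_TS F ->
  forall x y : V, (lamS F [set x] <= (lamS F [set y]).+1)%N.
Proof.
move=> TS.
have deg x : \sum_(y | y != x) defect F lam x y
             = (2 * lamS F [set x])%N%:Z - (#|V|.-1 * lam)%N%:Z.
  rewrite /defect sumrB.
  have cast (f : V -> nat) :
      \sum_(y | y != x) (f y)%:Z = (\sum_(y | y != x) f y)%N%:Z.
    by rewrite -natz natr_sum; apply: eq_bigr => y _; rewrite natz.
  rewrite (cast (fun y => lamS F [set x; y])) (cast (fun _ => lam)).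
  rewrite sum_lamS_pairs_at //.
  have -> : (\sum_(y | y != x) lam = \sum_(y in predC1 x) lam)%N by [].
  by rewrite sum_nat_const cardC1.
move=> x y.
have := defect_deg_window x; have := defect_deg_window y.
by rewrite !deg => /andP[h1 h2] /andP[h3 h4]; lia.
Qed.

End DefectGraph.

(* Case (C1): the defect graph G_eps has |eps| + 2 edges, and any triple system
   has at least as many units of squared deviation, since its odd graph has even
   degrees and |eps| + 2 is the least size compatible with its parity. *)
Lemma dev_sq_min_C1 (V : finType) (b : nat) (F F' : 'I_b -> {set V}) (lam : nat)
    (eps : int) :
  is_TS F -> is_TS F' -> assoc_pair #|V| b lam eps -> C1 #|V| b lam ->
  nearly2_C1 F lam eps ->
  (dev_sq F lam <= dev_sq F' lam)%N /\
  exists E lo, defect_iso F lam E /\ good_graph #|V| E lo.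
Proof.
move=> TS TS' [ap _] [v3 [_ [v5 v2]]] [rng [E [GE iso]]].
have v4 : (4 <= #|V|)%N by case: TS => h _; lia.
have [eps12 szE [lo good]] := G_good v4 GE.
split; last by exists E, lo.
rewrite (dev_sq_defect_graph iso good rng) szE.
have even_deg x : ~~ odd (odd_deg F' lam x).
  rewrite odd_deg_parity // oddM negb_and -!eqb0 -!modn2; apply/orP; lia.
have := odd_size_parity lam TS'; have := odd_size_le_dev_sq F' lam.
set C := 'C(#|V|, 2) in ap *; set o := odd_size F' lam => le_dev par.
have hm : (o %% 2 = (3 * b + C * lam) %% 2)%N by rewrite !modn2 par.
case: (posnP o) => [o0|opos]; last by have := even_graph_size even_deg opos; lia.
have ne : (3 * b != C * lam)%N by apply/eqP; lia.
by have := dev_sq_no_odd_pairs TS' o0 ne; lia.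
Qed.

(* Case (C2): the odd graph of any triple system has odd degrees, hence at least
   v/2 edges, and v/2 + 1 when its size has the parity of v/2 + 1. *)
Lemma dev_sq_min_C2 (V : finType) (b : nat) (F F' : 'I_b -> {set V}) (lam : nat)
    (eps : int) :
  is_TS F -> is_TS F' -> assoc_pair #|V| b lam eps -> C2 #|V| b lam ->
  nearly2_C2 F lam eps ->
  (dev_sq F lam <= dev_sq F' lam)%N /\
  exists E lo, defect_iso F lam E /\ good_graph #|V| E lo.
Proof.
move=> TS TS' [ap _] [ev [ol _]] [rng hc].
have v2 : (#|V| %% 2 = 0)%N by rewrite modn2 (negbTE ev).
have v4 : (4 <= #|V|)%N by case: TS => h _; lia.
have odd_deg x : odd (odd_deg F' lam x).
  by rewrite odd_deg_parity // oddM ol oddB ?(negbTE ev) //; lia.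
have := odd_graph_size odd_deg; have := odd_size_le_dev_sq F' lam.
have := odd_size_parity lam TS'.
set C := 'C(#|V|, 2) in ap *; set o := odd_size F' lam => par le_dev cover.
have hm : (o %% 2 = (3 * b + C * lam) %% 2)%N by rewrite !modn2 par.
have e2 := even_half ev.
move: hc; case: ifP => hpar.
  move=> iso; have [good sz] := H0_good eps ev.
  split; last by exists (H0_edges #|V| eps), (-1).
  by rewrite (dev_sq_defect_graph iso good rng) sz; lia.
have hn : (`|eps - (#|V|./2)%:Z| %% 2 = 1)%N by rewrite modn2 (negbFE hpar).
have o_ne : (o != #|V|./2)%N by apply/eqP => oe; move: hm hn; rewrite oe; lia.
case=> [[_ iso]|[_ iso]].
  have [good sz] := H1_good eps ev v4.
  split; last by exists (H1_edges #|V| eps), (-1).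
  by rewrite (dev_sq_defect_graph iso good rng) sz; lia.
have [good sz] := H2_good eps ev v4.
split; last by exists (H2_edges #|V| eps), (-1).
by rewrite (dev_sq_defect_graph iso good rng) sz; lia.
Qed.

Theorem theorem2p3 (R : realType) (V : finType) (b : nat)
  (F : 'I_b -> {set V}) :
  NWBTS F ->
  forall F' : 'I_b -> {set V}, is_TS F' ->
  forall x : R, 1 <= x -> Ppoly F x <= Ppoly F' x.
Proof.
move=> [TS [bal3 [lam [eps [ap cases]]]]] F' TS' x x1.
have [dev_le [E [lo [iso good]]]] :
    (dev_sq F lam <= dev_sq F' lam)%N /\
    exists E lo, defect_iso F lam E /\ good_graph #|V| E lo.
  by case: cases => [[c1 n1]|[c2 n2]];
    [exact: (dev_sq_min_C1 TS TS' ap c1 n1) | exact: (dev_sq_min_C2 TS TS' ap c2 n2)].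
apply: Ppoly_le_of_Qk => // -[|[|[|[|k]]]].
- by rewrite !Qk0.
- apply: Qk_min => // S S' /eqP/cards1P[y ->] /eqP/cards1P[z ->].
  exact: points_balanced iso good TS y z.
- exact: Qk2_min dev_le.
- exact: Qk_min.
- by rewrite !Qk_large.
Qed.
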